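(* Let $p\ge 3$ and let $m_0,\dots,m_{p-1}$ be positive integers with $m=\sum_{i=0}^{p-1}m_i$ and $m_i<\lfloor m/2\rfloor$ for all $i$. Consider homogeneous communication parameters $\gamma=\beta=1$ and $0<\alpha<1$ with $\lceil\log_2 p\rceil\alpha<1$. Then every communication tree on $\{0,\dots,p-1\}$ that has minimum completion time among all such trees (with any root) has a root with at least two children, and its completion time is at least $m+2\alpha$.
   Context: Processors $0,\dots,p-1$; processor $i$ has a data block of size $m_i$; $\mathrm{Size}(R)=\sum_{i\in R}m_i$. Transmitting $s$ units between any two processors costs $\alpha+\beta s$; local copying of $s$ units costs $\gamma s$. A communication tree on a nonempty set $R$ with root $r\in R$ is either trivial ($R=\{r\}$), or the root $r$ with a sequence of entries $(E_0,\dots,E_j)$ where exactly one entry is a ''local copy'' marker, every other entry is a communication tree on a set $R_t$ with root $r_t$ (the children of $r$ are these $r_t$), there is at least one tree entry, and $\{r\}$ together with the $R_t$ partition $R$. Completion time: trivial tree $0$; otherwise $c_{-1}=0$, $c_t=c_{t-1}+\gamma m_r$ for the copy marker, $c_t=\max(c_{t-1},\mathrm{cost}(E_t))+\alpha+\beta\,\mathrm{Size}(R_t)$ for a tree entry; $\mathrm{cost}=c_j$. *)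

From mathcomp Require Import all_boot all_order all_algebra.
Set Implicit Arguments. Unset Strict Implicit. Unset Printing Implicit Defensive.
Import Order.TTheory GRing.Theory Num.Theory.

(* A tree is [CNode r es]: root processor [r] and a
   sequence of entries [es]; an entry is [None] (the "local copy" marker)
   or [Some t] (a subtree). *)
Inductive ctree : Type := CNode of nat & seq (option ctree).

Definition croot (t : ctree) : nat := let: CNode r _ := t in r.

Fixpoint cnodes (t : ctree) : seq nat :=
  let: CNode r es := t in
  r :: (fix go (es : seq (option ctree)) : seq nat :=
          match es with
          | [::] => [::]
          | None :: es' => go es'
          | Some t' :: es' => cnodes t' ++ go es'
          end) es.

Definition is_copy (e : option ctree) : bool :=
  if e is None then true else false.

Fixpoint cshape_ok (t : ctree) : bool :=
  let: CNode r es := t in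
  ((if es is [::] then true else false) ||
   ((count is_copy es == 1%N) && has (fun e => ~~ is_copy e) es)) &&
  (fix go (es : seq (option ctree)) : bool :=
     match es with
     | [::] => true
     | None :: es' => go es'
     | Some t' :: es' => cshape_ok t' && go es'
     end) es.

(* [t] is a communication tree on {0,...,p-1}: shape is correct and the
   processor sets {r} and R_t partition {0,...,p-1} (recursively; global
   duplicate-freeness of [cnodes t] gives disjointness at every level). *)
Definition ctree_on (p : nat) (t : ctree) : bool :=
  cshape_ok t && perm_eq (cnodes t) (iota 0 p).

Definition nchildren (t : ctree) : nat :=
  let: CNode _ es := t in count (fun e => ~~ is_copy e) es.

Section Cost.
Local Open Scope ring_scope.
Variable (R : realFieldType) (m : nat -> nat) (alpha beta gamma : R).

Definition csize (t : ctree) : nat := (\sum_(i <- cnodes t) m i)%N.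

Fixpoint ccost (t : ctree) : R :=
  let: CNode r es := t in
  if es is [::] then 0 else
  (fix go (c : R) (es : seq (option ctree)) : R :=
     match es with
     | [::] => c
     | None :: es' => go (c + gamma * (m r)%:R) es'
     | Some t' :: es' =>
         go (Num.max c (ccost t') + alpha + beta * (csize t')%:R) es'
     end) 0 es.
End Cost.

From mathcomp Require Import all_boot all_order all_algebra.
From mathcomp Require Import zify lra.
Set Implicit Arguments. Unset Strict Implicit. Unset Printing Implicit Defensive.
Import Order.TTheory GRing.Theory Num.Theory.
Local Open Scope ring_scope.

(* The root processes its entries one after the other: they copy its own block
   and transmit every other block exactly once, at [alpha] per child, so with
   [gamma = beta = 1] a tree whose root has k children costs at least m + k alpha.
   A root r with a single child tc is never optimal: re-rooting at the root of tc
   and hanging r below it as a leaf replaces the last transmission, of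
   size(tc) > m_r units, by one of m_r units. *)

Fixpoint cnodes_seq (es : seq (option ctree)) : seq nat :=
  match es with
  | [::] => [::]
  | None :: es' => cnodes_seq es'
  | Some t' :: es' => cnodes t' ++ cnodes_seq es'
  end.

Fixpoint cshape_seq (es : seq (option ctree)) : bool :=
  match es with
  | [::] => true
  | None :: es' => cshape_seq es'
  | Some t' :: es' => cshape_ok t' && cshape_seq es'
  end.

Lemma cnodesE r es : cnodes (CNode r es) = r :: cnodes_seq es.
Proof. by []. Qed.

Lemma cshape_okE r es : cshape_ok (CNode r es) =
  ((if es is [::] then true else false) ||
   ((count is_copy es == 1%N) && has (fun e => ~~ is_copy e) es)) && cshape_seq es.
Proof. by []. Qed.

Lemma cnodes_seq_cat es1 es2 : cnodes_seq (es1 ++ es2) = cnodes_seq es1 ++ cnodes_seq es2.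
Proof. by elim: es1 => [|[t|] es IH] //=; rewrite IH catA. Qed.

Lemma cshape_seq_cat es1 es2 : cshape_seq (es1 ++ es2) = cshape_seq es1 && cshape_seq es2.
Proof. by elim: es1 => [|[t|] es IH] //=; rewrite IH andbA. Qed.

Lemma size_cnodes_ctree_on p t : ctree_on p t -> size (cnodes t) = p.
Proof. by case/andP=> _ /perm_size ->; rewrite size_iota. Qed.

Lemma csize_ctree_on p (m : nat -> nat) t :
  ctree_on p t -> csize m t = (\sum_(j < p) m j)%N.
Proof.
case/andP=> _ hperm.
by rewrite /csize (perm_big _ hperm) -(big_mkord xpredT) /index_iota subn0.
Qed.

Lemma croot_ctree_on p t : ctree_on p t -> (croot t < p)%N.
Proof.
case: t => r es /andP[_ /perm_mem/(_ r)].
by rewrite cnodesE mem_head mem_iota add0n => /esym.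
Qed.

Lemma entries_single_child r e es :
  cshape_ok (CNode r (e :: es)) -> (nchildren (CNode r (e :: es)) < 2)%N ->
  exists tc, e :: es = [:: Some tc; None] \/ e :: es = [:: None; Some tc].
Proof.
rewrite cshape_okE orFb has_count /nchildren => /andP[/andP[/eqP hcopy hchild] _] lt2.
have /eqP : size (e :: es) == 2%N.
  by rewrite -(count_predC is_copy) hcopy eqSS eqn_leq -ltnS lt2.
case: e es hcopy hchild {lt2} => [t1|] [|[t2|] []] //= *.
- by exists t1; left.
- by exists t2; right.
Qed.

Definition graft (t : ctree) (r : nat) : ctree :=
  let: CNode rc es := t in CNode rc (rcons es (Some (CNode r [::]))).

Lemma ctree_on_graft p t r :
  cshape_ok t -> (1 < size (cnodes t))%N -> perm_eq (r :: cnodes t) (iota 0 p) ->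
  ctree_on p (graft t r).
Proof.
case: t => rc [|e es] //; rewrite cshape_okE cnodesE orFb.
move=> /andP[/andP[/eqP hcopy hchild] hsh] _ hperm; apply/andP; split.
  by rewrite cshape_okE -cats1 count_cat has_cat cshape_seq_cat hcopy hchild hsh.
rewrite cnodesE -cats1 cnodes_seq_cat; apply: perm_trans hperm.
by rewrite -cat_cons cats1 perm_rcons.
Qed.

Section Cost.
Variables (R : realFieldType) (m : nat -> nat) (alpha beta gamma : R).

Notation cost := (ccost m alpha beta gamma).

Definition ccost_from (r : nat) : R -> seq (option ctree) -> R :=
  fix go c es :=
    match es with
    | [::] => c
    | None :: es' => go (c + gamma * (m r)%:R) es'
    | Some t' :: es' => go (Num.max c (cost t') + alpha + beta * (csize m t')%:R) es'
    end.

Lemma ccost_cons r e es : cost (CNode r (e :: es)) = ccost_from r 0 (e :: es).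
Proof. by []. Qed.

Lemma ccost_from_cat r c es1 es2 :
  ccost_from r c (es1 ++ es2) = ccost_from r (ccost_from r c es1) es2.
Proof. by elim: es1 c => [|[t|] es IH] c //=. Qed.

Lemma ccost_from_ge r c es :
  c + (count is_copy es)%:R * (gamma * (m r)%:R)
    + (count (fun e => ~~ is_copy e) es)%:R * alpha
    + beta * (\sum_(i <- cnodes_seq es) m i)%N%:R <= ccost_from r c es.
Proof.
elim: es c => [|[t|] es IH] c /=.
- by rewrite big_nil !mul0r !mulr0 !addr0.
- apply: le_trans (IH _); rewrite big_cat /= add0n !natrD !mulrDl !mulrDr mul1r.
  have : c <= Num.max c (cost t) by rewrite le_max lexx.
  rewrite /csize; lra.
- by apply: le_trans (IH _); rewrite add0n natrD mulrDl mul1r; lra.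
Qed.

Lemma ccost_graft t r :
  (1 < size (cnodes t))%N ->
  cost (graft t r) = Num.max (cost t) 0 + alpha + beta * (m r)%:R.
Proof.
case: t => rc [|e es] // _.
have -> : cost (graft (CNode rc (e :: es)) r)
          = ccost_from rc 0 ((e :: es) ++ [:: Some (CNode r [::])]) by rewrite cats1.
by rewrite ccost_from_cat -ccost_cons /= /csize big_seq1.
Qed.

Lemma ccost_one_child r tc es :
  0 <= gamma -> es = [:: Some tc; None] \/ es = [:: None; Some tc] ->
  Num.max (cost tc) 0 + alpha + beta * (csize m tc)%:R <= cost (CNode r es).
Proof.
move=> gamma_ge0 [->|->]; rewrite ccost_cons /=.
  by rewrite [Num.max 0 _]maxC lerDl mulr_ge0 ?ler0n.
by rewrite add0r !lerD2r ge_max !le_max lexx mulr_ge0 ?ler0n ?orbT.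
Qed.

Lemma exists_cheaper_reroot p r tc es :
  0 <= gamma -> 0 < beta -> (2 < p)%N ->
  es = [:: Some tc; None] \/ es = [:: None; Some tc] ->
  ctree_on p (CNode r es) -> (m r < csize m tc)%N ->
  exists t', ctree_on p t' /\ cost t' < cost (CNode r es).
Proof.
move=> gamma_ge0 beta_gt0 p_gt2 hes hon hsize.
have hnodes : cnodes (CNode r es) = r :: cnodes tc.
  by case: hes hon => -> _; rewrite cnodesE /= cats0.
have tc_nontriv : (1 < size (cnodes tc))%N.
  by move: (size_cnodes_ctree_on hon); rewrite hnodes /=; lia.
have tc_shape : cshape_ok tc.
  by case/andP: hon; case: hes => -> /andP[_ /=]; rewrite andbT.
exists (graft tc r); split.
  by apply: ctree_on_graft => //; case/andP: hon => _; rewrite hnodes.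
rewrite ccost_graft //; apply: lt_le_trans (ccost_one_child r gamma_ge0 hes).
by rewrite ltrD2l ltr_pM2l // ltr_nat.
Qed.

End Cost.

Lemma ccost_ge_nchildren (R : realFieldType) (m : nat -> nat) (alpha beta : R) r e es :
  cshape_ok (CNode r (e :: es)) ->
  beta * (csize m (CNode r (e :: es)))%:R + (nchildren (CNode r (e :: es)))%:R * alpha
  <= ccost m alpha beta beta (CNode r (e :: es)).
Proof.
rewrite cshape_okE orFb => /andP[/andP[/eqP hcopy _] _].
have := ccost_from_ge m alpha beta beta r 0 (e :: es).
rewrite -ccost_cons hcopy /csize cnodesE big_cons natrD /nchildren; lra.
Qed.

Theorem lemma1 (R : realFieldType) (p : nat) (m : nat -> nat) (alpha : R) :
  (3 <= p)%N ->
  (forall i, (i < p)%N -> (0 < m i)%N) ->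
  (forall i, (i < p)%N -> (m i < (\sum_(j < p) m j) %/ 2)%N) ->
  0 < alpha -> alpha < 1 ->
  (up_log 2 p)%:R * alpha < 1 ->
  forall t : ctree, ctree_on p t ->
  (forall t' : ctree, ctree_on p t' -> ccost m alpha 1 1 t <= ccost m alpha 1 1 t') ->
  (2 <= nchildren t)%N /\
  ((\sum_(j < p) m j)%N)%:R + 2 * alpha <= ccost m alpha 1 1 t.
Proof.
move=> p_ge3 _ m_small alpha_gt0 _ _ [r [|e es]] hon hopt.
  by move: (size_cnodes_ctree_on hon) p_ge3 => <-.
have hshape : cshape_ok (CNode r (e :: es)) by case/andP: hon.
have hsum := csize_ctree_on m hon.
have [two_children|one_child] := leqP 2 (nchildren (CNode r (e :: es))).
  split=> //; apply: le_trans (ccost_ge_nchildren m alpha 1 hshape).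
  by rewrite mul1r hsum lerD2l ler_pM2r // (ler_nat R 2).
have [tc hes] := entries_single_child hshape one_child.
have mr_lt_tc : (m r < csize m tc)%N.
  have := m_small r (croot_ctree_on hon); rewrite -hsum.
  by case: hes => ->; rewrite /csize cnodesE big_cons /= cats0; lia.
have [t' [ht' cheaper]] := exists_cheaper_reroot alpha ler01 ltr01 p_ge3 hes hon mr_lt_tc.
by move: (hopt t' ht'); rewrite leNgt cheaper.
Qed.
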